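(* Suppose that along a sequence $p\to+\infty$ one has $(r_p-s_p)/\varepsilon_p^+\to-l$ for some $l\in(0,\infty)$. Then along the same sequence $s_p/\varepsilon_p^+\to l$.
   Context: Let $B$ be the open unit ball in $\mathbb R^2$. For $p>1$, $u_p$ denotes a least energy nodal radial solution of $-\Delta u=|u|^{p-1}u$ in $B$, $u=0$ on $\partial B$ (a radial sign-changing solution in $H^1_0(B)$ minimizing the energy $\frac12\int|\nabla u|^2-\frac1{p+1}\int|u|^{p+1}$ among radial functions $u$ with $u^\pm\ne0$ and $\int_B|\nabla u^\pm|^2=\int_B|u^\pm|^{p+1}$), normalized with $u_p(0)<0$. Write $u_p(x)=u_p(|x|)$. $r_p\in(0,1)$ is the nodal radius ($u_p<0$ on $[0,r_p)$, $u_p>0$ on $(r_p,1)$), $s_p\in(r_p,1)$ satisfies $u_p(s_p)=\max u_p$, and $(\varepsilon_p^+)^{-2}=p\,u_p(s_p)^{p-1}$. *)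

From Stdlib Require Import Reals Lra.
Open Scope R_scope.

(* x^y for x >= 0 with the convention 0^y = 0 (y > 0). *)
Definition rpow (x y : R) : R := if Rle_dec x 0 then 0 else Rpower x y.

Definition Rint (f : R -> R) (a b v : R) : Prop :=
  exists pr : Riemann_integrable f a b, RiemannInt pr = v.

(* Radial profile r |-> u(r) on [0,1] of a function of H^1_0(B), B unit ball
   of R^2; du is its derivative.  We take C^1 profiles with u(1) = 0
   (the minimizer is a classical solution, so minimizing over
   this class gives the same least energy nodal radial solutions). *)
Definition radial_class (u du : R -> R) : Prop :=
  (forall r, 0 <= r <= 1 -> derivable_pt_lim u r (du r)) /\
  (forall r, 0 <= r <= 1 -> continuity_pt du r) /\
  u 1 = 0.

Definition posp (x : R) : R := Rmax x 0.
Definition negp (x : R) : R := Rmin x 0.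

(* integrals over B in polar coordinates: int_B f(|x|) dx = 2 PI int_0^1 f(r) r dr *)
(* int_B |grad w|^2 = int_B |w|^(p+1), for w = part(u) (u^+ or |u^-|) *)
Definition nehari_part (p : R) (part : R -> R) (u du : R -> R) : Prop :=
  exists a b,
    Rint (fun r => 2 * PI * (if Rlt_dec 0 (part (u r)) then 1 else 0)
                   * (du r) ^ 2 * r) 0 1 a /\
    Rint (fun r => 2 * PI * rpow (Rabs (part (u r))) (p + 1) * r) 0 1 b /\
    a = b.

Definition nodal_nehari (p : R) (u du : R -> R) : Prop :=
  (exists r, 0 <= r <= 1 /\ 0 < u r) /\
  (exists r, 0 <= r <= 1 /\ u r < 0) /\
  nehari_part p posp u du /\
  nehari_part p (fun x => - negp x) u du.

Definition energy_is (p : R) (u du : R -> R) (e : R) : Prop :=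
  exists a b,
    Rint (fun r => 2 * PI * (du r) ^ 2 * r) 0 1 a /\
    Rint (fun r => 2 * PI * rpow (Rabs (u r)) (p + 1) * r) 0 1 b /\
    e = a / 2 - b / (p + 1).

(* u solves -Delta u = |u|^(p-1) u in B (radially: -u'' - u'/r = |u|^(p-1) u
   for 0 < r < 1), u = 0 on the boundary. *)
Definition radial_solution (p : R) (u du : R -> R) : Prop :=
  radial_class u du /\
  exists d2u : R -> R, forall r, 0 < r < 1 ->
    derivable_pt_lim du r (d2u r) /\
    - d2u r - du r / r = rpow (Rabs (u r)) (p - 1) * u r.

Definition least_energy_nodal_radial (p : R) (u du : R -> R) : Prop :=
  radial_solution p u du /\ nodal_nehari p u du /\
  exists e, energy_is p u du e /\
    forall v dv e', radial_class v dv -> nodal_nehari p v dv ->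
      energy_is p v dv e' -> e <= e'.

(* eps with eps^(-2) = p * M^(p-1), M = u_p(s_p) > 0 *)
Definition eps_plus (p M : R) : R := / sqrt (p * Rpower M (p - 1)).

(** On the positive bump [(r_p, 1)] the radial equation gives
    [-(t u')' = t u^p <= t M^p] with [M = u(s_p)] and [u'(s_p) = 0]; integrating from
    [t] to [s_p] bounds [t u'(t)], and the mean value theorem on [[r_p, s_p]] (where
    [u] climbs from [u(r_p) <= 0] to [M]) yields [r_p <= M^(p-1) s_p (s_p - r_p)^2].
    In the scale [eps = eps_p^+] this reads [p b <= (b + d) d^2] with [b = r_p/eps]
    and [d = (s_p - r_p)/eps]; since [d -> l] and [p -> oo], [b -> 0], hence
    [s_p/eps = b + d -> l]. *)

From Stdlib Require Import Reals Lra Psatz Lia.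
From Coquelicot Require Import Coquelicot.
Open Scope R_scope.

Lemma nonpos_of_neg_left (f : R -> R) (a r : R) :
  a < r -> continuity_pt f r -> (forall t, a < t < r -> f t < 0) -> f r <= 0.
Proof.
  intros Har Hf Hneg.
  destruct (Rle_dec (f r) 0) as [|Hpos]; [assumption | exfalso].
  destruct (Hf (f r) ltac:(lra)) as [delta [Hdelta Hnear]].
  set (h := Rmin delta (r - a) / 2).
  assert (Hh : 0 < h < delta /\ h < r - a).
  { assert (Rmin delta (r - a) <= delta) by apply Rmin_l.
    assert (Rmin delta (r - a) <= r - a) by apply Rmin_r.
    assert (0 < Rmin delta (r - a)) by (apply Rmin_pos; lra).
    unfold h; lra. }
  assert (Hft : f (r - h) < 0) by (apply Hneg; lra).
  assert (Hclose : Rabs (f (r - h) - f r) < f r).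
  { apply Hnear; split.
    - split; [exact I | lra].
    - simpl; unfold R_dist; rewrite Rabs_left; lra. }
  rewrite Rabs_left in Hclose; lra.
Qed.

Lemma rpow_source_le (p x M : R) :
  1 < p -> 0 < x <= M -> rpow (Rabs x) (p - 1) * x <= Rpower M (p - 1) * M.
Proof.
  intros Hp Hx.
  unfold rpow; rewrite Rabs_pos_eq by lra.
  destruct (Rle_dec x 0); [lra |].
  assert (Hpow : Rpower x (p - 1) <= Rpower M (p - 1)) by (apply Rle_Rpower_l; lra).
  assert (0 < Rpower x (p - 1)) by apply exp_pos.
  apply Rmult_le_compat; lra.
Qed.

(* [g(t) = t du(t) - K (s^2 - t^2)/2] is nondecreasing since [g' = t (d2u + du/t + K)]. *)
Lemma radial_flux_le (du d2u : R -> R) (K t s : R) :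
  0 < t <= s -> du s = 0 ->
  (forall c, t <= c <= s -> derivable_pt_lim du c (d2u c) /\ - d2u c - du c / c <= K) ->
  t * du t <= K * (s ^ 2 - t ^ 2) / 2.
Proof.
  intros Hts Hds Hode.
  destruct (Req_dec t s) as [-> | Hne]; [rewrite Hds; nra |].
  set (g := fun x => x * du x - K * (s ^ 2 - x ^ 2) / 2).
  set (dg := fun x => du x + x * d2u x + K * x).
  destruct (MVT_cor2 g dg t s ltac:(lra)) as [c [Hmvt Hc]].
  { intros c Hc; destruct (Hode c Hc) as [Hd2 _].
    unfold g, dg.
    replace (du c + c * d2u c + K * c) with ((1 * du c + c * d2u c) - (- K * c)) by ring.
    apply (derivable_pt_lim_minus (fun x => x * du x) (fun x => K * (s ^ 2 - x ^ 2) / 2)).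
    - apply (derivable_pt_lim_mult id du c 1 (d2u c)); [apply derivable_pt_lim_id | exact Hd2].
    - apply is_derive_Reals; auto_derive; [auto | field]. }
  assert (Hdg : 0 <= dg c).
  { destruct (Hode c ltac:(lra)) as [_ Hsrc].
    assert (Hcpos : 0 < c) by lra.
    assert (Hdg_eq : dg c = c * (d2u c + du c / c + K)) by (unfold dg; field; lra).
    rewrite Hdg_eq; apply Rmult_le_pos; lra. }
  unfold g in Hmvt; rewrite Hds in Hmvt; nra.
Qed.

Lemma nodal_gap_bound (p : R) (u du : R -> R) (r s : R) :
  1 < p -> radial_solution p u du -> 0 < r < s -> s < 1 ->
  (forall t, 0 <= t < r -> u t < 0) ->
  (forall t, r < t < 1 -> 0 < u t) ->
  (forall t, 0 <= t <= 1 -> u t <= u s) ->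
  r <= Rpower (u s) (p - 1) * s * (s - r) ^ 2.
Proof.
  intros Hp [[Hd _] [d2u Hode]] Hrs Hs1 Hneg Hpos Hmax.
  set (M := u s); set (Q := Rpower M (p - 1)).
  assert (HM : 0 < M) by (apply Hpos; lra).
  assert (HQ : 0 < Q) by apply exp_pos.
  assert (Hds : du s = 0).
  { assert (pr : derivable_pt u s) by (exists (du s); apply Hd; lra).
    rewrite <- (deriv_maximum u 0 1 s pr ltac:(lra) Hs1 ltac:(intros; apply Hmax; lra)).
    symmetry; apply derive_pt_eq_0, Hd; lra. }
  assert (Hur : u r <= 0).
  { apply (nonpos_of_neg_left u 0 r); [lra | | intros; apply Hneg; lra].
    apply derivable_continuous_pt; exists (du r); apply Hd; lra. }
  destruct (MVT_cor2 u du r s ltac:(lra)) as [c [Hmvt Hc]].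
  { intros c Hc; apply Hd; lra. }
  assert (Hflux : c * du c <= Q * M * (s ^ 2 - c ^ 2) / 2).
  { apply (radial_flux_le du d2u); [lra | exact Hds |].
    intros x Hx; destruct (Hode x ltac:(lra)) as [Hd2 Heq]; split; [exact Hd2 |].
    rewrite Heq; apply rpow_source_le; [lra | split; [apply Hpos | apply Hmax]; lra]. }
  assert (Hrise : M <= du c * (s - r)) by (fold M in Hmvt; lra).
  assert (Hcdu : M * r <= c * du c * (s - r)).
  { apply Rle_trans with (M * c); [apply Rmult_le_compat_l; lra |].
    rewrite Rmult_assoc, (Rmult_comm c); apply Rmult_le_compat_r; lra. }
  assert (Hflux' : c * du c <= Q * M * (s * (s - r))).
  { assert (Hsq : (s ^ 2 - c ^ 2) / 2 <= s * (s - r)) by nra.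
    assert (HQM : 0 < Q * M) by (apply Rmult_lt_0_compat; lra).
    apply Rle_trans with (Q * M * ((s ^ 2 - c ^ 2) / 2)); [lra |].
    apply Rmult_le_compat_l; lra. }
  apply Rmult_le_reg_l with M; [lra |].
  apply Rle_trans with (c * du c * (s - r)); [exact Hcdu |].
  replace (M * (Q * s * (s - r) ^ 2)) with (Q * M * (s * (s - r)) * (s - r)) by ring.
  apply Rmult_le_compat_r; lra.
Qed.

Lemma eps_plus_pos (p M : R) : 0 < p -> 0 < eps_plus p M.
Proof.
  intros Hp; apply Rinv_0_lt_compat, sqrt_lt_R0.
  apply Rmult_lt_0_compat; [lra | apply exp_pos].
Qed.

Lemma eps_plus_sqr (p M : R) : 0 < p -> eps_plus p M ^ 2 * (p * Rpower M (p - 1)) = 1.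
Proof.
  intros Hp.
  assert (HpQ : 0 < p * Rpower M (p - 1)) by (apply Rmult_lt_0_compat; [lra | apply exp_pos]).
  assert (Hsqrt := sqrt_sqrt _ (Rlt_le _ _ HpQ)).
  assert (0 < sqrt (p * Rpower M (p - 1))) by (apply sqrt_lt_R0; lra).
  unfold eps_plus; rewrite <- Hsqrt at 2; field; lra.
Qed.

Lemma nodal_gap_bound_scaled (p : R) (u du : R -> R) (r s : R) :
  1 < p -> radial_solution p u du -> 0 < r < s -> s < 1 ->
  (forall t, 0 <= t < r -> u t < 0) ->
  (forall t, r < t < 1 -> 0 < u t) ->
  (forall t, 0 <= t <= 1 -> u t <= u s) ->
  let eps := eps_plus p (u s) in
  r / eps * p <= s / eps * ((s - r) / eps) ^ 2.
Proof.
  intros Hp Hsol Hrs Hs1 Hneg Hpos Hmax eps.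
  assert (Hgap := nodal_gap_bound p u du r s Hp Hsol Hrs Hs1 Hneg Hpos Hmax).
  assert (He : 0 < eps) by (apply eps_plus_pos; lra).
  assert (Hscale := eps_plus_sqr p (u s) ltac:(lra)); fold eps in Hscale.
  set (Q := Rpower (u s) (p - 1)) in *.
  apply Rle_trans with (Q * s * (s - r) ^ 2 * (p / eps)).
  - replace (r / eps * p) with (r * (p / eps)) by (field; lra).
    apply Rmult_le_compat_r; [apply Rdiv_le_0_compat; lra | exact Hgap].
  - right.
    replace (s / eps * ((s - r) / eps) ^ 2)
      with (s / eps * ((s - r) / eps) ^ 2 * (eps ^ 2 * (p * Q))) by (rewrite Hscale; ring).
    field; lra.
Qed.

Lemma mul_le_of_scaled_bound (b d p l : R) :
  0 < b -> 0 < d < 2 * l -> 8 * l ^ 2 < p -> b * p <= (b + d) * d ^ 2 -> b * p <= 16 * l ^ 3.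
Proof.
  intros Hb Hd Hp Hbound.
  assert (Hd2 : d ^ 2 < 4 * l ^ 2) by nra.
  assert (Hd3 : d ^ 3 < 8 * l ^ 3) by nra.
  assert (Hhalf : b * (p / 2) <= b * (p - d ^ 2)) by (apply Rmult_le_compat_l; lra).
  nra.
Qed.

Lemma Un_cv_0_of_scaled_bound (b d p : nat -> R) (l : R) :
  0 < l -> cv_infty p -> Un_cv d l -> (forall n, 0 < b n) ->
  (forall n, b n * p n <= (b n + d n) * d n ^ 2) -> Un_cv b 0.
Proof.
  intros Hl Hp Hd Hb Hbound eps Heps.
  destruct (Hd l Hl) as [N1 HN1].
  destruct (Hp (Rmax (8 * l ^ 2) (16 * l ^ 3 / eps))) as [N2 HN2].
  exists (max N1 N2); intros n Hn.
  assert (Hdn := HN1 n ltac:(lia)); unfold R_dist in Hdn; apply Rabs_def2 in Hdn.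
  assert (Hpn := HN2 n ltac:(lia)).
  assert (Hp8 := Rle_lt_trans _ _ _ (Rmax_l _ _) Hpn).
  assert (Hp16 := Rle_lt_trans _ _ _ (Rmax_r _ _) Hpn).
  assert (Hbp := mul_le_of_scaled_bound (b n) (d n) (p n) l (Hb n) ltac:(lra) Hp8 (Hbound n)).
  assert (Hpeps : 16 * l ^ 3 < eps * p n).
  { apply (Rmult_lt_compat_l eps) in Hp16; [| exact Heps].
    replace (eps * (16 * l ^ 3 / eps)) with (16 * l ^ 3) in Hp16 by (field; lra); exact Hp16. }
  unfold R_dist; rewrite Rminus_0_r, Rabs_pos_eq by (left; apply Hb).
  assert (Hb' := Hb n).
  nra.
Qed.

Theorem lemma3p5 (pn : nat -> R) (u du : nat -> R -> R) (rn sn : nat -> R) (l : R) :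
  cv_infty pn ->
  (forall n, 1 < pn n) ->
  (forall n, least_energy_nodal_radial (pn n) (u n) (du n)) ->
  (forall n, u n 0 < 0) ->
  (forall n, 0 < rn n < 1 /\
     (forall r, 0 <= r < rn n -> u n r < 0) /\
     (forall r, rn n < r < 1 -> 0 < u n r)) ->
  (forall n, rn n < sn n < 1 /\
     (forall r, 0 <= r <= 1 -> u n r <= u n (sn n))) ->
  0 < l ->
  Un_cv (fun n => (rn n - sn n) / eps_plus (pn n) (u n (sn n))) (- l) ->
  Un_cv (fun n => sn n / eps_plus (pn n) (u n (sn n))) l.
Proof.
  intros Hinf Hp Hsol _ Hr Hs Hl Hcv.
  set (eps n := eps_plus (pn n) (u n (sn n))).
  assert (Heps : forall n, 0 < eps n) by (intros n; apply eps_plus_pos; specialize (Hp n); lra).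
  set (b n := rn n / eps n); set (d n := (sn n - rn n) / eps n).
  assert (Hd : Un_cv d l).
  { rewrite <- (Ropp_involutive l).
    apply (Un_cv_ext (opp_seq (fun n => (rn n - sn n) / eps n))); [| now apply CV_opp].
    intros n; unfold opp_seq, d; field; apply Rgt_not_eq, Heps. }
  assert (Hb : Un_cv b 0).
  { apply (Un_cv_0_of_scaled_bound b d pn l Hl Hinf Hd).
    - intros n; apply Rdiv_lt_0_compat; [apply Hr | apply Heps].
    - intros n.
      destruct (Hr n) as [Hrn [Hneg Hpos]], (Hs n) as [Hsn Hmax], (Hsol n) as [Hrad _].
      replace (b n + d n) with (sn n / eps n) by (unfold b, d; field; apply Rgt_not_eq, Heps).
      exact (nodal_gap_bound_scaled _ (u n) (du n) (rn n) (sn n) (Hp n) Hrad ltac:(lra) ltac:(lra) Hneg Hpos Hmax). }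
  rewrite <- (Rplus_0_l l).
  apply (Un_cv_ext (fun n => b n + d n)); [| now apply CV_plus].
  intros n; unfold b, d; fold (eps n); field; apply Rgt_not_eq, Heps.
Qed.
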